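(* Let $\mathbf{u}$ be quasi-definite with SMOP $(P_n)$ satisfying $xP_n=P_{n+1}+b_nP_n+a_nP_{n-1}$, monic Jacobi matrix $J$, and let $c\in\mathbb{C}$ with $P_n(c)\ne0$ for all $n$. Set $\beta_n=-P_{n+1}(c)/P_n(c)$ ($n\ge0$) and $\ell_n=-a_nP_{n-1}(c)/P_n(c)$ ($n\ge1$), so that $J-cI=LU$ with $L$ lower bidiagonal (diagonal $1$, subdiagonal $\ell_1,\ell_2,\dots$) and $U$ upper bidiagonal (diagonal $\beta_0,\beta_1,\dots$, superdiagonal $1$). Let $J_\alpha$ be the monic Jacobi matrix of the polynomials $R_n(x)=\frac{\mathbf{u}_0}{\widetilde{\mathbf{u}}_0}[(x-c)P^{(1)}_n(x)-P_{n+1}(x)]$, where $\widetilde{\mathbf{u}}=(x-c)\mathbf{u}$, and let $\widetilde J^{(1)}$ be the monic Jacobi matrix of the associated polynomials of the first kind $(\widetilde P^{(1)}_n)$ of $\widetilde{\mathbf{u}}$. Let $L_1$ be the lower bidiagonal matrix with diagonal $1$ and subdiagonal $\ell_2,\ell_3,\dots$, and $U_1$ the upper bidiagonal matrix with diagonal $\beta_1,\beta_2,\dots$ and superdiagonal $1$ (i.e. $L_1=\Lambda L\Lambda^\top$, $U_1=\Lambda U\Lambda^\top$, $\Lambda$ the shift matrix with $\Lambda_{i,i+1}=1$ and zeros elsewhere). Then $$J_\alpha-cI=L_1U_1,\qquad \widetilde J^{(1)}-cI=U_1L_1.$$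
   Context: Quasi-definite: all leading principal Hankel minors of the moments nonzero; SMOP = sequence of monic orthogonal polynomials with $xP_n=P_{n+1}+b_nP_n+a_nP_{n-1}$, $P_{-1}=0,P_0=1$, $a_n\neq0$. The monic Jacobi matrix of a sequence satisfying such a recurrence is the semi-infinite tridiagonal matrix with diagonal $(b_0,b_1,\dots)$, superdiagonal entries $1$ and subdiagonal $(a_1,a_2,\dots)$. Associated polynomials of the first kind: monic, $xP^{(1)}_n=P^{(1)}_{n+1}+b_{n+1}P^{(1)}_n+a_{n+1}P^{(1)}_{n-1}$, $P^{(1)}_{-1}=0,P^{(1)}_0=1$. $\langle(x-c)\mathbf{u},p\rangle=\langle\mathbf{u},(x-c)p\rangle$, $\widetilde{\mathbf{u}}_0=\langle\widetilde{\mathbf{u}},1\rangle$. *)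

(* Scalars: an arbitrary numClosedFieldType C (e.g. algC, or
   complex R for R : rcfType), standing in for the complex numbers. *)
From HB Require Import structures.
From mathcomp Require Import all_boot all_order all_algebra.
Set Implicit Arguments. Unset Strict Implicit. Unset Printing Implicit Defensive.
Import Order.TTheory GRing.Theory Num.Theory.
Local Open Scope ring_scope.

Section Defs.
Variable C : numClosedFieldType.

Definition mfun (m : nat -> C) (p : {poly C}) : C :=
  \sum_(i < size p) p`_i * m i.

Definition mulfun (c : C) (L : {poly C} -> C) (p : {poly C}) : C :=
  L (('X - c%:P) * p).

Definition quasi_definite (m : nat -> C) : Prop :=
  forall n : nat, \det (\matrix_(i < n.+1, j < n.+1) m (i + j)%N) != 0.

Definition is_SMOP (L : {poly C} -> C) (P : nat -> {poly C}) : Prop :=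
  forall n : nat,
    [/\ P n \is monic, size (P n) = n.+1,
        (forall k : nat, k != n -> L (P n * P k) = 0) & L (P n * P n) != 0].

Definition TTRR (P : nat -> {poly C}) (b a : nat -> C) : Prop :=
  [/\ P 0%N = 1,
      'X * P 0%N = P 1%N + b 0%N *: P 0%N,
      (forall n : nat, 'X * P n.+1 = P n.+2 + b n.+1 *: P n.+1 + a n.+1 *: P n)
    & (forall n : nat, a n.+1 != 0)].

(* The monic polynomial sequence generated by the recurrence with
   coefficients b, a : returns (P_{n-1}, P_n). *)
Fixpoint mpair (b a : nat -> C) (n : nat) : {poly C} * {poly C} :=
  match n with
  | 0%N => (0, 1)
  | k.+1 => let pq := mpair b a k in
            (pq.2, ('X - (b k)%:P) * pq.2 - a k *: pq.1)
  end.

Definition assoc1 (b a : nat -> C) (n : nat) : {poly C} :=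
  (mpair (fun k => b k.+1) (fun k => a k.+1) n).2.

(* Semi-infinite matrices are functions nat -> nat -> C (0-based indices). *)
Definition infmx := nat -> nat -> C.

Definition idmx : infmx := fun i j => (i == j)%:R.

Definition jacobi (b a : nat -> C) : infmx := fun i j =>
  if i == j then b i else if j == i.+1 then 1 else if i == j.+1 then a i else 0.

(* Lower bidiagonal with diagonal 1 and subdiagonal (s_0, s_1, ...):
   entry (j+1, j) is s j. *)
Definition lbidiag (s : nat -> C) : infmx := fun i j =>
  if i == j then 1 else if i == j.+1 then s j else 0.

Definition ubidiag (d : nat -> C) : infmx := fun i j =>
  if i == j then d i else if j == i.+1 then 1 else 0.

(* Product of semi-infinite matrices A B, where A i k = 0 for k > i+1
   (true for all bidiagonal/tridiagonal matrices here); then the sum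
   sum_k A i k B k j is exactly the finite sum over k <= i+1. *)
Definition bandmul (A B : infmx) : infmx := fun i j =>
  \sum_(k < i.+2) A i k * B k j.

Definition beta (P : nat -> {poly C}) (c : C) (n : nat) : C :=
  - (P n.+1).[c] / (P n).[c].
Definition ell (P : nat -> {poly C}) (a : nat -> C) (c : C) (n : nat) : C :=
  - (a n * (P n.-1).[c]) / (P n).[c].

End Defs.

From Pilot Require Import Defs.
From HB Require Import structures.
From mathcomp Require Import all_boot all_order all_algebra.
From mathcomp Require Import ring zify.
Set Implicit Arguments. Unset Strict Implicit. Unset Printing Implicit Defensive.
Import Order.TTheory GRing.Theory Num.Theory.
Local Open Scope ring_scope.

(* Evaluating the recurrence x P_n = P_{n+1} + b_n P_n + a_n P_{n-1} at x = c
   gives the scalar identities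
     beta_0 = b_0 - c,   ell_{n+1} + beta_{n+1} = b_{n+1} - c,
     ell_{n+1} beta_n = a_{n+1},
   which say that J - c I = L U.  Both claimed identities are then checked
   entrywise, via the explicit tridiagonal shape of a product of a lower and
   an upper bidiagonal matrix (in either order):
   - (x - c) P^(1)_n - P_{n+1} satisfies the recurrence with coefficients
     (b_1 - ell_1, b_2, b_3, ...) and (a_2, a_3, ...), which are the entries
     of L_1 U_1 + c I; the factor u_0 / ~u_0 equals 1 / (b_0 - c) and makes
     these polynomials monic;
   - the kernel polynomials K_n = (P_{n+1} + beta_n P_n) / (x - c) are the
     SMOP of ~u = (x - c) u, and satisfy the recurrence with coefficients
     c + beta_n + ell_{n+1} and beta_n ell_n; dropping the first row and
     column of their Jacobi matrix (associated polynomials) gives U_1 L_1 + c I. *)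

Section MomentFunctional.
Variables (C : numClosedFieldType) (m : nat -> C).

Lemma mfunE (p : {poly C}) N :
  (size p <= N)%N -> mfun m p = \sum_(i < N) p`_i * m i.
Proof.
move=> hN; rewrite /mfun (big_ord_widen _ (fun i => p`_i * m i) hN) big_mkcond /=.
apply: eq_bigr => i _; case: ifP => // /negbT; rewrite -leqNgt => h.
by rewrite nth_default // mul0r.
Qed.

Lemma mfunD (p q : {poly C}) : mfun m (p + q) = mfun m p + mfun m q.
Proof.
set N := maxn (size p) (size q).
rewrite (mfunE (size_polyD p q)) (@mfunE p N) ?leq_maxl //
  (@mfunE q N) ?leq_maxr // -big_split /=.
by apply: eq_bigr => i _; rewrite coefD mulrDl.
Qed.

Lemma mfunZ (x : C) (p : {poly C}) : mfun m (x *: p) = x * mfun m p.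
Proof.
rewrite (mfunE (size_scale_leq x p)) /mfun mulr_sumr.
by apply: eq_bigr => i _; rewrite coefZ mulrA.
Qed.

Lemma mfun0 : mfun m 0 = 0.
Proof. by rewrite /mfun size_poly0 big_ord0. Qed.

Lemma mfun1 : mfun m 1 = m 0%N.
Proof. by rewrite /mfun size_poly1 big_ord1 coef1 mul1r. Qed.

Lemma mfun_orth (P : nat -> {poly C}) n (p : {poly C}) :
  is_SMOP (mfun m) P -> (size p <= n)%N -> mfun m (P n * p) = 0.
Proof.
move=> hS; suff orthN N (q : {poly C}) :
    (N <= n)%N -> (size q <= N)%N -> mfun m (P n * q) = 0.
  by move=> hp; exact: orthN hp _.
elim: N q => [|N IH] q hN hq.
  by move: hq; rewrite leqn0 size_poly_eq0 => /eqP ->; rewrite mulr0 mfun0.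
have [mN sN _ _] := hS N; have [_ _ hPn _] := hS n.
have -> : q = (q - q`_N *: P N) + q`_N *: P N by rewrite subrK.
rewrite mulrDr mfunD -scalerAr mfunZ hPn ?mulr0 ?addr0; last first.
  by apply/eqP => e; move: hN; rewrite e ltnn.
apply: IH; first exact: ltnW.
apply/leq_sizeP => j hj; rewrite coefB coefZ.
case: (ltngtP N j) => [hlt|hlt|<-].
- rewrite [(P N)`_j]nth_default ?sN // [q`_j]nth_default ?mulr0 ?subr0 //.
  exact: leq_trans hq hlt.
- by rewrite leqNgt hlt in hj.
by move: mN; rewrite qualifE /= lead_coefE sN /= => /eqP ->; rewrite mulr1 subrr.
Qed.

Lemma size_sub_monic (p q : {poly C}) n :
  p \is monic -> q \is monic -> size p = n.+1 -> size q = n.+1 ->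
  (size (p - q)%R <= n)%N.
Proof.
move=> mp mq sp sq; apply/leq_sizeP => j hj.
rewrite coefB; case: (ltngtP n j) => [hlt|hlt|<-].
- by rewrite !nth_default ?subr0 // ?sp ?sq.
- by rewrite leqNgt hlt in hj.
move: mp mq; rewrite !qualifE /= !lead_coefE sp sq /= => /eqP -> /eqP ->.
by rewrite subrr.
Qed.

Lemma mfun_orth_monic (P : nat -> {poly C}) n (p : {poly C}) :
  is_SMOP (mfun m) P -> p \is monic -> size p = n.+1 ->
  mfun m (P n * p) = mfun m (P n * P n).
Proof.
move=> hS mp sp; have [mPn sPn _ _] := hS n.
rewrite -[p](subrK (P n)) mulrDr mfunD mfun_orth ?add0r //.
exact: size_sub_monic.
Qed.
End MomentFunctional.

Section ThreeTermRecurrence.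
Variable C : numClosedFieldType.
Implicit Types (P : nat -> {poly C}) (b a : nat -> C).

Lemma TTRR_rec P b a :
  TTRR P b a ->
  P 1%N = 'X - (b 0%N)%:P /\
  forall n, P n.+2 = ('X - (b n.+1)%:P) * P n.+1 - a n.+1 *: P n.
Proof.
case=> hP0 hP1 hPS _; split.
  by move: hP1; rewrite hP0 mulr1 alg_polyC => ->; ring.
by move=> n; rewrite mulrBl hPS -mul_polyC; ring.
Qed.

Lemma TTRR_intro P b a :
  P 0%N = 1 -> P 1%N = 'X - (b 0%N)%:P ->
  (forall n, P n.+2 = ('X - (b n.+1)%:P) * P n.+1 - a n.+1 *: P n) ->
  (forall n, a n.+1 != 0) -> TTRR P b a.
Proof.
move=> hP0 hP1 hPS ha; split=> // [|n].
  by rewrite hP1 hP0 mulr1 alg_polyC; ring.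
by rewrite hPS -!mul_polyC; ring.
Qed.

Lemma mpair_TTRR b a :
  (forall n, a n.+1 != 0) -> TTRR (fun n => (mpair b a n).2) b a.
Proof.
by move=> ha; apply: TTRR_intro => //=; rewrite scaler0 subr0 mulr1.
Qed.

Lemma assoc1_TTRR P b a :
  TTRR P b a -> TTRR (assoc1 b a) (fun k => b k.+1) (fun k => a k.+1).
Proof. by case=> _ _ _ ha; apply: mpair_TTRR. Qed.
End ThreeTermRecurrence.

Section BandMatrices.
Variable C : numClosedFieldType.
Implicit Types (b a s d : nat -> C) (i j : nat).

Lemma jacobi_subc b a (c : C) i j :
  jacobi b a i j - c * idmx C i j = jacobi (fun k => b k - c) a i j.
Proof. by rewrite /jacobi /idmx; case: eqP => _; rewrite ?mulr1 ?mulr0 ?subr0. Qed.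

Lemma jacobi_ext b a b' a' :
  (forall i, b i = b' i) -> (forall i, a i.+1 = a' i.+1) ->
  forall i j, jacobi b a i j = jacobi b' a' i j.
Proof.
move=> eb ea i j; rewrite /jacobi eb; case: eqP => // _; case: eqP => // _.
by case: eqP => // ->; rewrite ea.
Qed.

Lemma bandmul_lu s d i j :
  bandmul (lbidiag s) (ubidiag d) i j =
  jacobi (fun k => if k is k'.+1 then s k' + d k else d 0%N)
         (fun k => s k.-1 * d k.-1) i j.
Proof.
rewrite /bandmul; case: i => [|i].
  rewrite !big_ord_recr big_ord0 /= /lbidiag /ubidiag /jacobi.
  case: j => [|[|j]] //=; ring.
rewrite !big_ord_recr /= big1 => [|k _]; last first.
  have := ltn_ord k; rewrite /lbidiag.
  by case: eqP => [?|_]; [lia|]; case: eqP => [?|_]; [lia|]; rewrite mul0r.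
rewrite /lbidiag /ubidiag /jacobi /=.
repeat (case: eqP => [?|?]; try lia); subst; ring.
Qed.

Lemma bandmul_ul s d i j :
  bandmul (ubidiag d) (lbidiag s) i j =
  jacobi (fun k => d k + s k) (fun k => d k * s k.-1) i j.
Proof.
rewrite /bandmul; case: i => [|i].
  rewrite !big_ord_recr big_ord0 /= /lbidiag /ubidiag /jacobi.
  case: j => [|[|j]] //=; ring.
rewrite !big_ord_recr /= big1 => [|k _]; last first.
  have := ltn_ord k; rewrite /ubidiag.
  by case: eqP => [?|_]; [lia|]; case: eqP => [?|_]; [lia|]; rewrite mul0r.
rewrite /lbidiag /ubidiag /jacobi /=.
repeat (case: eqP => [?|?]; try lia); subst; ring.
Qed.
End BandMatrices.

Section LUFactorization.
Variables (C : numClosedFieldType) (P : nat -> {poly C}) (b a : nat -> C) (c : C).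
Hypothesis hP : TTRR P b a.
Hypothesis hc : forall n, (P n).[c] != 0.

Local Notation beta := (beta P c).
Local Notation ell := (ell P a c).

Lemma TTRR_horner n :
  (P n.+2).[c] = (c - b n.+1) * (P n.+1).[c] - a n.+1 * (P n).[c].
Proof. by have [_ ->] := TTRR_rec hP; rewrite !hornerE. Qed.

(* The entries of J - c I = L U, read off from the recurrence at c. *)
Lemma beta0 : beta 0 = b 0%N - c.
Proof.
have [hP0 _ _ _] := hP; have [hP1 _] := TTRR_rec hP.
by rewrite /Defs.beta hP1 hP0 !hornerE; field.
Qed.

Lemma ell_add_beta n : ell n.+1 + beta n.+1 = b n.+1 - c.
Proof. by rewrite /Defs.ell /Defs.beta TTRR_horner /=; field; apply: hc. Qed.

Lemma ell_mul_beta n : ell n.+1 * beta n = a n.+1.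
Proof. by rewrite /Defs.ell /Defs.beta /=; field; rewrite ?hc. Qed.

Lemma beta_neq0 n : beta n != 0.
Proof. by rewrite /Defs.beta mulf_neq0 ?oppr_eq0 ?invr_eq0. Qed.

Lemma ell_neq0 n : ell n.+1 != 0.
Proof.
have [_ _ _ ha] := hP.
by rewrite /Defs.ell mulf_neq0 ?oppr_eq0 ?mulf_neq0 ?invr_eq0.
Qed.

(* beta_n is chosen so that c is a root of P_{n+1} + beta_n P_n. *)
Lemma root_kernel_numerator n : root (P n.+1 + beta n *: P n) c.
Proof. by rewrite /root hornerD hornerZ /Defs.beta; apply/eqP; field. Qed.

(* ell_1 = a_1 / (b_0 - c), the correction to the first diagonal entry of J_alpha. *)
Lemma ell1 : ell 1 = a 1%N / (b 0%N - c).
Proof.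
have [hP0 _ _ _] := hP; have [hP1 _] := TTRR_rec hP.
have hb0 : b 0%N - c != 0 by rewrite -beta0 beta_neq0.
rewrite /Defs.ell /= hP0 hP1 !hornerE; field.
by rewrite hb0 -oppr_eq0 opprB.
Qed.

Lemma alpha_TTRR :
  TTRR (fun n => (b 0%N - c)^-1 *: (('X - c%:P) * assoc1 b a n - P n.+1))
       (fun i => if i is 0 then b 1%N - a 1%N / (b 0%N - c) else b i.+1)
       (fun i => a i.+1).
Proof.
have [hP0 _ _ ha] := hP; have [hP1 hPS] := TTRR_rec hP.
have [A0 _ _ _] := assoc1_TTRR hP; have [A1 ASS] := TTRR_rec (assoc1_TTRR hP).
have hb0 : b 0%N - c != 0 by rewrite -beta0 beta_neq0.
apply: TTRR_intro => [||n|//].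
- have -> : ('X - c%:P) * assoc1 b a 0 - P 1%N = (b 0%N - c)%:P.
    by rewrite A0 hP1 polyCB; ring.
  by rewrite scale_polyC mulVf.
- have -> : ('X - c%:P) * assoc1 b a 1 - P 2%N =
            (b 0%N - c) *: ('X - (b 1%N)%:P) + (a 1%N)%:P.
    by rewrite A1 hPS hP1 hP0 -!mul_polyC polyCB; ring.
  by rewrite scalerDr scalerA mulVf // scale1r scale_polyC polyCB mulrC; ring.
- by rewrite ASS hPS -!mul_polyC; ring.
Qed.

Lemma alpha_jacobi_LU i j :
  jacobi (fun i => if i is 0 then b 1%N - a 1%N / (b 0%N - c) else b i.+1)
         (fun i => a i.+1) i j - c * idmx C i j
  = bandmul (lbidiag (fun j => ell j.+2)) (ubidiag (fun i => beta i.+1)) i j.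
Proof.
have eb n : b n.+1 = ell n.+1 + beta n.+1 + c by rewrite ell_add_beta subrK.
rewrite jacobi_subc bandmul_lu; apply: jacobi_ext => [[|k]|k] /=.
- by rewrite -ell1 eb; ring.
- by rewrite ell_add_beta.
- by rewrite ell_mul_beta.
Qed.
End LUFactorization.

Section KernelPolynomials.
Variables (C : numClosedFieldType) (m : nat -> C) (P : nat -> {poly C}).
Variables (b a : nat -> C) (c : C).
Hypothesis hS : is_SMOP (mfun m) P.
Hypothesis hP : TTRR P b a.
Hypothesis hc : forall n, (P n).[c] != 0.

Local Notation ut := (mulfun c (mfun m)).
Local Notation beta := (beta P c).
Local Notation ell := (ell P a c).

Lemma m0_neq0 : m 0%N != 0.
Proof. by have [_ _ _] := hS 0%N; have [-> _ _ _] := hP; rewrite mulr1 mfun1. Qed.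

(* (x - c) u has first moment (b_0 - c) u_0, since x - c = P_1 + (b_0 - c) P_0. *)
Lemma mulfun_moment0 : ut 1 = (b 0%N - c) * m 0%N.
Proof.
have [hP0 _ _ _] := hP; have [hP1 _] := TTRR_rec hP; have [_ _ orth1 _] := hS 1%N.
rewrite /mulfun.
have -> : ('X - c%:P) * 1 = P 1%N * P 0%N + (b 0%N - c) *: (P 0%N * P 0%N).
  by rewrite hP0 !mulr1 hP1 -mul_polyC polyCB; ring.
by rewrite mfunD orth1 // mfunZ hP0 mulr1 mfun1 add0r.
Qed.

Lemma alpha_normalization : m 0%N / ut 1 = (b 0%N - c)^-1.
Proof.
have hb0 : b 0%N - c != 0 by rewrite -(beta0 c hP) (beta_neq0 hc).
by rewrite mulfun_moment0 invfM mulrA mulrC mulrA mulVf ?m0_neq0 ?mul1r.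
Qed.

Definition kernel_poly n : {poly C} := (P n.+1 + beta n *: P n) %/ ('X - c%:P).

Lemma kernel_polyK n : ('X - c%:P) * kernel_poly n = P n.+1 + beta n *: P n.
Proof.
by rewrite mulrC divpK // dvdp_XsubCl root_kernel_numerator.
Qed.

Lemma kernel_numerator_monic n :
  P n.+1 + beta n *: P n \is monic /\ size (P n.+1 + beta n *: P n) = n.+2.
Proof.
have [mP sP _ _] := hS n.+1; have [_ sPn _ _] := hS n.
have small : (size (beta n *: P n) < size (P n.+1))%N.
  by apply: leq_ltn_trans (size_scale_leq _ _) _; rewrite sPn sP.
by rewrite qualifE /= lead_coefDl // size_polyDl // sP; move: mP; rewrite qualifE.
Qed.

Lemma kernel_poly_monic n : kernel_poly n \is monic.
Proof.
by rewrite -(monicMl _ (monicXsubC c)) kernel_polyK; case: (kernel_numerator_monic n).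
Qed.

Lemma size_kernel_poly n : size (kernel_poly n) = n.+1.
Proof.
have [_] := kernel_numerator_monic n.
rewrite -kernel_polyK size_Mmonic ?polyXsubC_eq0 ?kernel_poly_monic //.
by rewrite size_XsubC; case.
Qed.

Lemma kernel_pairing n (p : {poly C}) :
  (size p <= n.+1)%N -> ut (kernel_poly n * p) = beta n * mfun m (P n * p).
Proof.
move=> hp; rewrite /mulfun mulrA kernel_polyK mulrDl mfunD (mfun_orth hS hp).
by rewrite add0r -scalerAl mfunZ.
Qed.

Lemma kernel_SMOP : is_SMOP ut kernel_poly.
Proof.
have orth n k : (k < n)%N -> ut (kernel_poly n * kernel_poly k) = 0.
  move=> hkn; rewrite kernel_pairing ?size_kernel_poly 1?ltnW //.
  by rewrite (mfun_orth hS) ?mulr0 // size_kernel_poly.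
move=> n; split; [exact: kernel_poly_monic|exact: size_kernel_poly| |].
- move=> k; case: (ltngtP k n) => [hkn|hnk|->]; rewrite ?eqxx // => _.
    exact: orth.
  by rewrite mulrC orth.
- rewrite kernel_pairing ?size_kernel_poly // (mfun_orth_monic hS).
  + by have [_ _ _ nrm] := hS n; rewrite mulf_neq0 ?(beta_neq0 hc).
  + exact: kernel_poly_monic.
  + exact: size_kernel_poly.
Qed.

Lemma kernel_TTRR :
  TTRR kernel_poly (fun n => c + beta n + ell n.+1) (fun n => beta n * ell n).
Proof.
have [hP0 _ _ _] := hP; have [hP1 hPS] := TTRR_rec hP.
have eb0 : b 0%N = beta 0 + c by rewrite (beta0 c hP) subrK.
have eb n : b n.+1 = ell n.+1 + beta n.+1 + c by rewrite (ell_add_beta hP hc) subrK.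
have ea n : a n.+1 = ell n.+1 * beta n by rewrite (ell_mul_beta a hc).
have XcN : 'X - c%:P != 0 by rewrite polyXsubC_eq0.
apply: TTRR_intro => [||n|n]; try apply: (mulfI XcN).
- by rewrite kernel_polyK mulr1 hP1 hP0 eb0 -mul_polyC polyCD; ring.
- rewrite kernel_polyK hPS hP1 hP0 eb0 eb ea.
  by rewrite -!mul_polyC !polyCD !polyCM; ring.
- rewrite mulrBr mulrCA -scalerAr !kernel_polyK !hPS !eb !ea.
  by rewrite -!mul_polyC !polyCD !polyCM; ring.
- by rewrite mulf_neq0 ?(beta_neq0 hc) ?(ell_neq0 hP hc).
Qed.

Lemma kernel_jacobi_UL i j :
  jacobi (fun k => c + beta k.+1 + ell k.+2) (fun k => beta k.+1 * ell k.+1) i j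
    - c * idmx C i j
  = bandmul (ubidiag (fun i => beta i.+1)) (lbidiag (fun j => ell j.+2)) i j.
Proof.
rewrite jacobi_subc bandmul_ul; apply: jacobi_ext => k //=; ring.
Qed.
End KernelPolynomials.

Theorem mainTheorem12 (C : numClosedFieldType) (m : nat -> C)
    (P : nat -> {poly C}) (b a : nat -> C) (c : C) :
  quasi_definite m ->
  is_SMOP (mfun m) P ->
  TTRR P b a ->
  (forall n : nat, (P n).[c] != 0) ->
  let ut := mulfun c (mfun m) in
  let R := fun n : nat =>
    (m 0%N / ut 1) *: (('X - c%:P) * assoc1 b a n - P n.+1) in
  let L1 := lbidiag (fun j => ell P a c j.+2) in
  let U1 := ubidiag (fun i => beta P c i.+1) in
  (exists ba aa : nat -> C,
      TTRR R ba aa /\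
      forall i j : nat, jacobi ba aa i j - c * idmx C i j = bandmul L1 U1 i j) /\
  (exists (Pt : nat -> {poly C}) (bt at_ : nat -> C),
      [/\ is_SMOP ut Pt, TTRR Pt bt at_ &
      forall i j : nat,
        jacobi (fun k => bt k.+1) (fun k => at_ k.+1) i j - c * idmx C i j
        = bandmul U1 L1 i j]).
Proof.
move=> _ hS hP hc ut R L1 U1; split.
- exists (fun i => if i is 0 then b 1%N - a 1%N / (b 0%N - c) else b i.+1).
  exists (fun i => a i.+1); split; last exact: alpha_jacobi_LU.
  by rewrite /R /ut (alpha_normalization hS hP hc); exact: alpha_TTRR.
- exists (kernel_poly P c), (fun n => c + beta P c n + ell P a c n.+1).
  exists (fun n => beta P c n * ell P a c n); split.
  + exact: kernel_SMOP.
  + exact: (kernel_TTRR hP hc).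
  + exact: kernel_jacobi_UL.
Qed.
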